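(* Let $(X,T)$ be a topological dynamical system and $\pi:(X,T)\to(X_{eq},T_{eq})$ the factor map onto its maximal equicontinuous factor. If $(X,T)$ is block $\mathcal{F}_t$-sensitive then $\pi$ is not proximal.
   Context: A topological dynamical system $(X,T)$: compact metric space $(X,d)$, $T$ continuous surjective. $(X,T)$ is block $\mathcal{F}_t$-sensitive if there is $\delta>0$ such that for each $x\in X$, every neighborhood $U$ of $x$ and every $l\in\mathbb{N}$ there is $y_l\in U$ such that $\{n\in\mathbb{Z}_+: d(T^nx,T^ny_l)>\delta\}$ contains $\{m+1,\dots,m+l\}$ for some $m\in\mathbb{N}$. $X_{eq}$ is the maximal equicontinuous factor (every equicontinuous factor of $(X,T)$ is a factor of it). A pair $(x,y)$ is proximal if $\inf_n d(T^nx,T^ny)=0$; a factor map $\pi$ is proximal if every pair $(x,y)$ with $\pi(x)=\pi(y)$ is proximal. *)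

From HB Require Import structures.
From mathcomp Require Import all_boot all_order all_algebra.
From mathcomp Require Import all_classical all_reals all_analysis.
Set Implicit Arguments. Unset Strict Implicit. Unset Printing Implicit Defensive.
Import Order.TTheory GRing.Theory Num.Theory.
Local Open Scope classical_set_scope.
Local Open Scope ring_scope.

Section Dyn.
Context {R : realType}.

Definition TDS (X : metricType R) (T : X -> X) : Prop :=
  compact [set: X] /\ continuous T /\ (forall y : X, exists x, T x = y).

Definition factor_map (X Y : metricType R) (T : X -> X) (S : Y -> Y)
    (pi : X -> Y) : Prop :=
  continuous pi /\ (forall y : Y, exists x, pi x = y) /\
  (forall x, pi (T x) = S (pi x)).

Definition equicontinuous_system (Y : metricType R) (S : Y -> Y) : Prop :=
  forall e : R, 0 < e -> exists2 d : R, 0 < d &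
    forall x y : Y, mdist x y < d -> forall n : nat,
      mdist (iter n S x) (iter n S y) < e.

Definition max_equicontinuous_factor (X Y : metricType R) (T : X -> X)
    (S : Y -> Y) (pi : X -> Y) : Prop :=
  TDS S /\ equicontinuous_system S /\ factor_map T S pi /\
  forall (Z : metricType R) (U : Z -> Z) (phi : X -> Z),
    TDS U -> equicontinuous_system U -> factor_map T U phi ->
    exists psi : Y -> Z, factor_map S U psi /\ forall x, phi x = psi (pi x).

(* block F_t-sensitivity (N = {1,2,...}, Z_+ = {0,1,2,...}) *)
Definition block_Ft_sensitive (X : metricType R) (T : X -> X) : Prop :=
  exists2 delta : R, 0 < delta &
    forall (x : X) (U : set X), nbhs x U -> forall l : nat, (0 < l)%N ->
      exists y : X, U y /\
        exists m : nat, (0 < m)%N /\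
          forall n : nat, (m < n <= m + l)%N ->
            delta < mdist (iter n T x) (iter n T y).

Definition proximal_pair (X : metricType R) (T : X -> X) (x y : X) : Prop :=
  forall e : R, 0 < e -> exists n : nat, mdist (iter n T x) (iter n T y) < e.

Definition proximal_map (X Y : metricType R) (T : X -> X) (pi : X -> Y) : Prop :=
  forall x y : X, pi x = pi y -> proximal_pair T x y.

End Dyn.

From mathcomp Require Import all_boot all_order all_algebra.
From mathcomp Require Import all_classical all_reals all_analysis.
From mathcomp Require Import lra zify.
Import Order.TTheory GRing.Theory Num.Theory.
Local Open Scope classical_set_scope.
Local Open Scope ring_scope.

(** Choose points y_k within 1/(k+1) of x whose orbits are delta-apart on
    the block of times m_k+1, ..., m_k+k+1, and let (a, b) be a cluster point
    of the pairs (T^(m_k+1) x, T^(m_k+1) y_k).  A fixed time j lies inside the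
    block for every k >= j, so the orbits of a and b stay delta-apart and
    (a, b) is not proximal.  Equicontinuity of the factor keeps the orbits of
    pi x and pi y_k uniformly close, so pi a = pi b. *)

Lemma iter_morph {A B : Type} [f : A -> B] [T : A -> A] [S : B -> B] (n : nat) :
  {morph f : x / T x >-> S x} -> {morph f : x / iter n T x >-> iter n S x}.
Proof. by move=> fT; elim: n => //= n IHn x; rewrite fT IHn. Qed.

Lemma continuous_iter {X : topologicalType} [T : X -> X] (n : nat) :
  continuous T -> continuous (iter n T).
Proof.
move=> cT; elim: n => [|n IHn] z; first exact: cvg_id.
exact: (continuous_comp (IHn z) (cT _)).
Qed.

Section metric_pair_cluster.
Context {R : realType}.

Lemma continuous_at_mdist {X Y : metricType R} [f : X -> Y] [x : X] [e : R] :
  {for x, continuous f} -> 0 < e ->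
  exists2 r : R, 0 < r & forall z, mdist x z < r -> mdist (f x) (f z) < e.
Proof.
move=> fx e0.
have /nbhs_ballP [r r0 fball] := fx _ (nbhsx_ballx (f x) e e0).
exists r => // z xz.
by have /= := fball z; rewrite !ballEmdist; apply.
Qed.

Lemma mdist_le_path {X : metricType R} (a b x y : X) :
  mdist a b <= mdist a x + mdist x y + mdist b y.
Proof.
rewrite (metric_sym b y); apply: (le_trans (metric_triangle a y b)).
by rewrite lerD2r metric_triangle.
Qed.

Definition pair_cluster {X : metricType R} (v w : nat -> X) (a b : X) : Prop :=
  forall (K : nat) (e : R), 0 < e ->
    exists2 k, (K <= k)%N & mdist a (v k) < e /\ mdist b (w k) < e.

Lemma compact_pair_cluster {X : metricType R} (v w : nat -> X) :
  compact [set: X] -> exists a b, pair_cluster v w a b.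
Proof.
move=> cX.
have cXX : compact [set: X * X] by rewrite -setXTT; apply: compact_setX.
have [[a b] [_ clab]] := cXX ((fun k => (v k, w k)) @ \oo) _ filterT.
exists a, b => K e e0.
have : [set (v k, w k) | k in [set k | (K <= k)%N]] `&`
    (ball a e `*` ball b e) !=set0.
  apply: clab; first by exists K => // k Kk; exists k.
  by exists (ball a e, ball b e) => //; split; apply: nbhsx_ballx.
by move=> [_ [[k Kk <-] [/=]]]; rewrite !ballEmdist; exists k.
Qed.

Lemma pair_cluster_comp {X Y : metricType R} [f : X -> Y]
    [v w : nat -> X] [a b : X] :
  continuous f -> pair_cluster v w a b ->
  pair_cluster (f \o v) (f \o w) (f a) (f b).
Proof.
move=> cf cl K e e0.
have [ra ra0 fa] := continuous_at_mdist (cf a) e0.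
have [rb rb0 fb] := continuous_at_mdist (cf b) e0.
have [|k Kk [vk wk]] := cl K (Num.min ra rb); first by rewrite lt_min ra0.
move: vk wk; rewrite !lt_min => /andP [vk _] /andP [_ wk].
by exists k => //; split; [apply: fa | apply: fb].
Qed.

Lemma pair_cluster_mdist_ge {X : metricType R} [v w : nat -> X] [a b : X]
    [K : nat] [c : R] :
  pair_cluster v w a b -> (forall k, (K <= k)%N -> c <= mdist (v k) (w k)) ->
  c <= mdist a b.
Proof.
move=> cl vw_ge; rewrite leNgt; apply/negP => ab_lt.
have e0 : 0 < (c - mdist a b) / 2 by lra.
have [k Kk [vk wk]] := cl K _ e0.
have := mdist_le_path (v k) (w k) a b.
rewrite (metric_sym (v k) a) (metric_sym (w k) b).
have := vw_ge k Kk; lra.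
Qed.

Lemma pair_cluster_eq {X : metricType R} [v w : nat -> X] [a b : X] :
  pair_cluster v w a b ->
  (forall e, 0 < e ->
     exists K, forall k, (K <= k)%N -> mdist (v k) (w k) < e) ->
  a = b.
Proof.
move=> cl vw_small; apply: mdist_positivity; apply/eqP.
rewrite eq_le mdist_ge0 andbT leNgt; apply/negP => ab_gt0.
have e0 : 0 < mdist a b / 3 by lra.
have [K vwK] := vw_small _ e0.
have [k Kk [vk wk]] := cl K _ e0.
have := mdist_le_path a b (v k) (w k).
have := vwK k Kk; lra.
Qed.

End metric_pair_cluster.

Section block_sensitivity.
Context {R : realType} {X : metricType R} {T : X -> X}.

Lemma block_Ft_sensitive_seq : block_Ft_sensitive T ->
  exists2 delta : R, 0 < delta & forall x : X,
    exists (y : nat -> X) (m : nat -> nat), forall k,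
      mdist x (y k) < k.+1%:R^-1 /\
      forall n, (m k < n <= m k + k.+1)%N ->
        delta < mdist (iter n T x) (iter n T (y k)).
Proof.
move=> [delta d0 sens]; exists delta => // x.
have block k : exists ym : X * nat, mdist x ym.1 < k.+1%:R^-1 /\
    forall n, (ym.2 < n <= ym.2 + k.+1)%N ->
      delta < mdist (iter n T x) (iter n T ym.1).
  have k0 : 0 < k.+1%:R^-1 :> R by rewrite invr_gt0 ltr0n.
  have [y [xy [m [_ ym]]]] := sens x _ (nbhsx_ballx x _ k0) k.+1 isT.
  by exists (y, m); move: xy; rewrite ballEmdist.
have [ym Hym] := choice block.
by exists (fun k => (ym k).1), (fun k => (ym k).2).
Qed.

Lemma block_separation_iter [x : X] [y : nat -> X] [m : nat -> nat]
    [delta : R] [j k : nat] :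
  (forall n, (m k < n <= m k + k.+1)%N ->
     delta < mdist (iter n T x) (iter n T (y k))) ->
  (j <= k)%N ->
  delta < mdist (iter j T (iter (m k).+1 T x))
                (iter j T (iter (m k).+1 T (y k))).
Proof.
by move=> sep jk; rewrite -!iterD; apply: sep; apply/andP; split; lia.
Qed.

Context {Y : metricType R} {S : Y -> Y} { pi : X -> Y }.

Lemma equicontinuous_factor_orbits_close
    [x : X] [y : nat -> X] [m : nat -> nat] :
  equicontinuous_system S -> {for x, continuous pi} ->
  {morph pi : z / T z >-> S z} ->
  (forall k, mdist x (y k) < k.+1%:R^-1) ->
  forall e, 0 < e -> exists K, forall k, (K <= k)%N ->
    mdist (pi (iter (m k) T x)) (pi (iter (m k) T (y k))) < e.
Proof.
move=> eqS cpi piT xy e e0.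
have [d d0 Sd] := eqS e e0.
have [r r0 pir] := continuous_at_mdist cpi d0.
have [K _ Kr] := near_infty_natSinv_lt (PosNum r0).
exists K => k Kk; rewrite !(iter_morph _ piT); apply: Sd; apply: pir.
exact: lt_trans (xy k) (Kr k Kk).
Qed.

Lemma block_Ft_sensitive_fibre_pair (x : X) :
  compact [set: X] -> continuous T -> continuous pi ->
  {morph pi : z / T z >-> S z} -> equicontinuous_system S ->
  block_Ft_sensitive T ->
  exists a b, pi a = pi b /\
    exists2 delta : R, 0 < delta &
      forall j, delta <= mdist (iter j T a) (iter j T b).
Proof.
move=> cX cT cpi piT eqS /block_Ft_sensitive_seq [delta d0 /(_ x) [y [m xym]]].
pose v k := iter (m k).+1 T x; pose w k := iter (m k).+1 T (y k).
have [a [b cl]] := compact_pair_cluster v w cX.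
exists a, b; split.
  apply: pair_cluster_eq (pair_cluster_comp cpi cl) _.
  exact: equicontinuous_factor_orbits_close eqS (cpi x) piT
    (fun k => (xym k).1).
exists delta => // j.
apply: (pair_cluster_mdist_ge (K := j)) => [|k jk].
  exact: pair_cluster_comp (continuous_iter j cT) cl.
exact: ltW (block_separation_iter (xym k).2 jk).
Qed.

End block_sensitivity.

Theorem proposition4p2 (R : realType) (X Y : metricType R)
    (T : X -> X) (S : Y -> Y) (pi : X -> Y) :
  (exists x : X, True) ->
  TDS T ->
  max_equicontinuous_factor T S pi ->
  block_Ft_sensitive T ->
  ~ proximal_map T pi.
Proof.
move=> [x _] [cX [cT _]] [_ [eqS [[cpi [_ piT]] _]]] sens prox.
have [a [b [ab [delta d0 sep]]]] :=
  block_Ft_sensitive_fibre_pair x cX cT cpi piT eqS sens.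
have [n close] := prox a b ab delta d0.
by move: (sep n); rewrite leNgt close.
Qed.
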